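(* Let $T>0$, $\mathbb{U}\subset\mathbb{R}^m$ compact non-empty, and $f:[0,T]\times\mathbb{R}^n\times\mathbb{U}\to\mathbb{R}^n$ continuous and Lipschitz in $x$ uniformly in $(s,u)$. Let $\overline{v}\in C([0,T]\times\mathbb{R}^n;\mathbb{R})$ be a viscosity supersolution of $-v_t+H(t,x,\nabla v)=0$ on $\Omega=\{(t,x)\in(0,T)\times\mathbb{R}^n\,|\,\overline{v}(t,x)<0\}$. Then $\overline{v}^\times(t,x):=\min\{\overline{v}(t,x),0\}$ belongs to $C([0,T]\times\mathbb{R}^n;\mathbb{R})$, is a viscosity supersolution of $-v_t+H(t,x,\nabla v)=0$ on $\Omega=(0,T)\times\mathbb{R}^n$, and satisfies $\overline{v}^\times(T,x)=\min\{\overline{v}(T,x),0\}$ for all $x\in\mathbb{R}^n$.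
   Context: The Hamiltonian is $H(t,x,p)=\max_{u\in\mathbb{U}}\langle -p,f(t,x,u)\rangle$. For an open set $\Omega\subseteq(0,T)\times\mathbb{R}^n$, a function $v\in C([0,T]\times\mathbb{R}^n;\mathbb{R})$ is a viscosity supersolution (resp. subsolution) of $-v_t+H(t,x,\nabla v)=0$ on $\Omega$ if for every $\xi\in C^1(\Omega;\mathbb{R})$ such that $v-\xi$ attains a local minimum (resp. local maximum) at $(t_0,x_0)\in\Omega$, one has $-\xi_t(t_0,x_0)+H(t_0,x_0,\nabla\xi(t_0,x_0))\ge 0$ (resp. $\le 0$). *)

From HB Require Import structures.
From mathcomp Require Import all_boot all_order all_algebra.
From mathcomp Require Import all_classical all_reals all_analysis.
Set Implicit Arguments. Unset Strict Implicit. Unset Printing Implicit Defensive.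
Import Order.TTheory GRing.Theory Num.Theory.
Import numFieldNormedType.Exports.
Local Open Scope classical_set_scope.
Local Open Scope ring_scope.

Definition dotrv (R : realType) (n : nat) (p q : 'rV[R]_n) : R :=
  \sum_(i < n) p ord0 i * q ord0 i.

(* Hamiltonian H(t,x,p) = max_{u in U} <-p, f(t,x,u)> (written as a sup;
   under the standing assumptions the sup is attained). *)
Definition hamiltonian (R : realType) (n m : nat)
  (f : R -> 'rV[R]_n -> 'rV[R]_m -> 'rV[R]_n) (U : set 'rV[R]_m)
  (t : R) (x : 'rV[R]_n) (p : 'rV[R]_n) : R :=
  sup [set dotrv (- p) (f t x u) | u in U].

Definition dtime (R : realType) (n : nat) (xi : R * 'rV[R]_n -> R) (z : R * 'rV[R]_n) : R :=
  'D_((1 : R), (0 : 'rV[R]_n)) xi z.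

Definition grad (R : realType) (n : nat) (xi : R * 'rV[R]_n -> R) (z : R * 'rV[R]_n) : 'rV[R]_n :=
  \row_(i < n) 'D_((0 : R), (delta_mx ord0 i : 'rV[R]_n)) xi z.

Definition C1_on (R : realType) (n : nat) (Om : set (R * 'rV[R]_n))
  (xi : R * 'rV[R]_n -> R) : Prop :=
  (forall z, Om z -> differentiable xi z) /\
  (forall v : R * 'rV[R]_n, {within Om, continuous (fun z => 'd xi z v)}).

Definition loc_min (R : realType) (n : nat) (g : R * 'rV[R]_n -> R) (z0 : R * 'rV[R]_n) : Prop :=
  \forall z \near z0, g z0 <= g z.

Definition visc_super (R : realType) (n m : nat)
  (f : R -> 'rV[R]_n -> 'rV[R]_m -> 'rV[R]_n) (U : set 'rV[R]_m)
  (Om : set (R * 'rV[R]_n)) (v : R * 'rV[R]_n -> R) : Prop :=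
  forall (xi : R * 'rV[R]_n -> R) (z0 : R * 'rV[R]_n),
    C1_on Om xi -> Om z0 -> loc_min (fun z => v z - xi z) z0 ->
    0 <= - dtime xi z0 + hamiltonian f U z0.1 z0.2 (grad xi z0).

Definition closed_strip (R : realType) (n : nat) (T : R) : set (R * 'rV[R]_n) :=
  [set z | 0 <= z.1 <= T].
Definition open_strip (R : realType) (n : nat) (T : R) : set (R * 'rV[R]_n) :=
  [set z | 0 < z.1 < T].

Definition cont_strip (R : realType) (n : nat) (T : R) (v : R * 'rV[R]_n -> R) : Prop :=
  {within @closed_strip R n T, continuous v}.

From HB Require Import structures.
From mathcomp Require Import all_boot all_order all_algebra.
From mathcomp Require Import all_classical all_reals all_analysis.
Set Implicit Arguments. Unset Strict Implicit. Unset Printing Implicit Defensive.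
Import Order.TTheory GRing.Theory Num.Theory.
Import numFieldNormedType.Exports.
Local Open Scope classical_set_scope.
Local Open Scope ring_scope.

(* A test function touching min(vbar, 0) from below at z0 also touches from
   below whichever of vbar and 0 realises the minimum at z0.  If vbar z0 < 0
   this is vbar, a supersolution near z0.  Otherwise it is the constant 0: the
   test function then has a local maximum at z0, so its time derivative and
   gradient vanish, and the inequality reduces to H(t, x, 0) = 0 >= 0. *)

Lemma at_right_dnbhs (R : numFieldType) (x : R) : x^'+ `=>` x^'.
Proof. by apply: within_subset => y /gt_eqF ->. Qed.

Lemma at_left_dnbhs (R : numFieldType) (x : R) : x^'- `=>` x^'.
Proof. by apply: within_subset => y /lt_eqF ->. Qed.

Lemma derive_loc_max_eq0 (R : realType) (V : normedModType R) (g : V -> R)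
    (z v : V) :
  derivable g z v -> (\forall y \near z, g y <= g z) -> 'D_v g z = 0.
Proof.
move=> dg gmax.
set q := fun h : R => h^-1 *: ((g \o shift z) (h *: v) - g z).
have qD : q @ 0^' --> 'D_v g z by exact: dg.
have [e e0 maxe] : \forall h \near 0 : R, g (h *: v + z) <= g z.
  have line_cvg : (h *: v + z) @[h --> 0 : R] --> z.
    rewrite -[z in _ --> z]add0r -(scale0r v).
    by apply: cvgD; [apply: cvgZr_tmp; exact: cvg_id | exact: cvg_cst].
  exact: line_cvg _ gmax.
have num_le0 h : 0 < `|h| < e -> g (h *: v + z) - g z <= 0.
  by move=> /andP[h0 he]; rewrite subr_le0; apply: maxe; rewrite /= sub0r normrN.
apply/eqP; rewrite eq_le; apply/andP; split.
  have qDr : q @ 0^'+ --> 'D_v g z := cvg_trans (cvg_app q (@at_right_dnbhs _ 0)) qD.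
  rewrite -(cvg_lim _ qDr) //; apply: limr_le; first exact: cvgP qDr.
  exists e => // h /= he h0; apply: mulr_ge0_le0; first by rewrite invr_ge0 ltW.
  by apply: num_le0; rewrite normr_gt0 gt_eqF //= -[h]subr0 distrC.
have qDl : q @ 0^'- --> 'D_v g z := cvg_trans (cvg_app q (@at_left_dnbhs _ 0)) qD.
rewrite -(cvg_lim _ qDl) //; apply: limr_ge; first exact: cvgP qDl.
exists e => // h /= he h0; apply: mulr_le0; first by rewrite invr_le0 ltW.
by apply: num_le0; rewrite normr_gt0 lt_eqF //= -[h]subr0 distrC.
Qed.

Section ViscositySupersolutions.
Variables (R : realType) (n m : nat).
Variables (f : R -> 'rV[R]_n -> 'rV[R]_m -> 'rV[R]_n) (U : set 'rV[R]_m).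

Lemma C1_onS (Om Om' : set (R * 'rV[R]_n)) (xi : R * 'rV[R]_n -> R) :
  Om' `<=` Om -> C1_on Om xi -> C1_on Om' xi.
Proof.
move=> sOm [xi_diff xi_cont]; split=> [z /sOm|v]; first exact: xi_diff.
exact: continuous_subspaceW (xi_cont v).
Qed.

Lemma hamiltonian0 t x : U !=set0 -> hamiltonian f U t x 0 = 0.
Proof.
move=> [u0 Uu0]; rewrite /hamiltonian.
suff -> : [set dotrv (- 0) (f t x u) | u in U] = [set 0] by rewrite sup1.
have dot0 u : dotrv (- 0) (f t x u) = 0.
  by rewrite oppr0 /dotrv big1 // => i _; rewrite mxE mul0r.
apply/seteqP; split=> [_ [u _ <-]|_ ->] /=; first exact: dot0.
by exists u0; rewrite ?dot0.
Qed.

Lemma visc_super0 (Om : set (R * 'rV[R]_n)) :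
  U !=set0 -> visc_super f U Om (fun=> 0).
Proof.
move=> U0 xi z0 [xi_diff _] Omz0 xi_min.
have xi_max : \forall z \near z0, xi z <= xi z0.
  by apply: filterS xi_min => z; rewrite !add0r lerN2.
have xi_der v : derivable xi z0 v by exact/diff_derivable/xi_diff.
have -> : dtime xi z0 = 0 by exact: derive_loc_max_eq0.
have -> : grad xi z0 = 0.
  by apply/rowP => i; rewrite !mxE; exact: derive_loc_max_eq0.
by rewrite hamiltonian0 // oppr0 add0r.
Qed.

Lemma visc_super_min (Om Om1 Om2 : set (R * 'rV[R]_n))
    (v1 v2 : R * 'rV[R]_n -> R) :
  Om1 `<=` Om -> Om2 `<=` Om ->
  (forall z, Om z -> v1 z < v2 z -> Om1 z) ->
  (forall z, Om z -> v2 z <= v1 z -> Om2 z) ->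
  visc_super f U Om1 v1 -> visc_super f U Om2 v2 ->
  visc_super f U Om (fun z => Num.min (v1 z) (v2 z)).
Proof.
move=> sOm1 sOm2 Om1_lt Om2_le v1_super v2_super xi z0 xi_C1 Omz0 min_min.
have min_below (v : R * 'rV[R]_n -> R) : Num.min (v1 z0) (v2 z0) = v z0 ->
    (forall z, Num.min (v1 z) (v2 z) <= v z) -> loc_min (fun z => v z - xi z) z0.
  move=> min_z0 min_le; apply: filterS min_min => z; rewrite min_z0 => le_z0.
  by rewrite (le_trans le_z0) // lerD2r.
have [lt12|le21] := ltP (v1 z0) (v2 z0).
  apply: v1_super; [exact: C1_onS xi_C1 | exact: Om1_lt | apply: min_below].
    by rewrite min_l // ltW.
  by move=> z; rewrite ge_min lexx.
apply: v2_super; [exact: C1_onS xi_C1 | exact: Om2_le | apply: min_below].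
  by rewrite min_r.
by move=> z; rewrite ge_min lexx orbT.
Qed.

End ViscositySupersolutions.

Theorem lemma5 (R : realType) (n m : nat) (T : R)
  (U : set 'rV[R]_m) (f : R -> 'rV[R]_n -> 'rV[R]_m -> 'rV[R]_n)
  (vbar : R * 'rV[R]_n -> R) :
  0 < T ->
  compact U -> U !=set0 ->
  {within [set q : R * 'rV[R]_n * 'rV[R]_m | 0 <= q.1.1 <= T /\ U q.2],
     continuous (fun q => f q.1.1 q.1.2 q.2)} ->
  (exists L : R, forall s x y u, 0 <= s <= T -> U u ->
     `|f s x u - f s y u| <= L * `|x - y|) ->
  cont_strip T vbar ->
  visc_super f U [set z | @open_strip R n T z /\ vbar z < 0] vbar ->
  let vx := fun z => Num.min (vbar z) 0 in
  [/\ cont_strip T vx,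
      visc_super f U (@open_strip R n T) vx
    & forall x : 'rV[R]_n, vx (T, x) = Num.min (vbar (T, x)) 0].
Proof.
move=> _ _ U0 _ _ vbar_cont vbar_super vx; split=> //.
  move=> z; apply: (@continuous_min _ (subspace (closed_strip T)) vbar (fun=> 0)).
    exact: vbar_cont.
  exact: cst_continuous.
apply: (visc_super_min (Om2 := open_strip T)) vbar_super (visc_super0 _ U0) => //.
by move=> z [].
Qed.
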